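(* Let $0<m\le L$, $\kappa=L/m$, and consider the accelerated gradient flow dynamics with $\alpha=1/L$ and constant parameters $(\beta,\gamma)$. The optimal (largest) exponential convergence rate achievable for all $f\in\mathcal{Q}_m^L$ is $\rho=1/\sqrt\kappa$, and the corresponding parameters are $\beta=1+(v-2)/\sqrt\kappa$, $\gamma=v\sqrt\kappa$, where $v\in[0,1]$. This rate is achieved by the heavy-ball dynamics ($\gamma=0$) with $v=0$ and, for $\kappa\ge4$, by Nesterov's dynamics ($\gamma=\beta$) with $v=(\sqrt\kappa-2)/(\kappa-1)$.
   Context: $\mathcal{Q}_m^L$ is the class of quadratic functions $f(x)=\tfrac12x^TQx-q^Tx$ on $\mathbb{R}^n$ with $q\in\mathbb{R}^n$, $Q=Q^T\succ0$ whose largest eigenvalue is $L$ and smallest is $m$; $x^\star$ is the minimizer. The (noiseless) accelerated gradient flow dynamics is $\ddot x+\theta\dot x+\alpha\nabla f(x+\gamma\dot x)=0$ with $\theta=1-\beta$; with $\psi=[(x-x^\star)^T,\dot x^T]^T$ this is $\dot\psi=A\psi$, $A=\begin{bmatrix}0&I\\-\alpha Q&-(\theta I+\gamma\alpha Q)\end{bmatrix}$. It is exponentially stable with rate $\rho>0$ for all $f\in\mathcal{Q}_m^L$ if, for every $f\in\mathcal{Q}_m^L$, all eigenvalues of $A$ have real part at most $-\rho$. *)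

From HB Require Import structures.
From mathcomp Require Import all_boot all_order all_algebra.
From mathcomp Require Import reals.
From mathcomp Require Import complex.

Set Implicit Arguments.
Unset Strict Implicit.
Unset Printing Implicit Defensive.

Import Order.TTheory GRing.Theory Num.Theory.
Local Open Scope ring_scope.

Definition sym_posdef (R : realType) (n : nat) (Q : 'M[R]_n) : Prop :=
  Q^T = Q /\ (forall x : 'cV[R]_n, x != 0 -> 0 < (x^T *m Q *m x) 0 0).

(* The Hessians Q of functions f(x) = 1/2 x^T Q x - q^T x in the class Q_m^L:
   Q symmetric positive definite, largest eigenvalue L, smallest eigenvalue m.
   (The linear term q does not enter the dynamics matrix A.) *)
Definition in_QmL (R : realType) (n : nat) (m L : R) (Q : 'M[R]_n) : Prop :=
  sym_posdef Q /\ eigenvalue Q L /\ eigenvalue Q m /\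
  (forall a : R, eigenvalue Q a -> m <= a <= L).

Definition AGF_matrix (R : realType) (n : nat) (alpha beta gamma : R)
  (Q : 'M[R]_n) : 'M[R]_(n + n) :=
  block_mx 0 1%:M (- (alpha *: Q))
    (- ((1 - beta) *: 1%:M + (gamma * alpha) *: Q)).

Definition cmx (R : realType) (p : nat) (A : 'M[R]_p) : 'M[R[i]]_p :=
  map_mx (fun x : R => Complex x 0) A.

Definition AGF_exp_stable (R : realType) (n : nat) (m L : R)
  (alpha beta gamma rho : R) : Prop :=
  0 < rho /\
  forall Q : 'M[R]_n, in_QmL m L Q ->
    forall z : R[i], eigenvalue (cmx (AGF_matrix alpha beta gamma Q)) z ->
      complex.Re z <= - rho.

(* For an eigenvector (u, w) of A, eliminating u from the two block equations
   gives -alpha (1 + gamma z) w Q = (z^2 + theta z) w.  Hence, Q being symmetric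
   with real spectrum, every eigenvalue z of A either satisfies 1 + gamma z = 0
   or is a root of z^2 + (theta + gamma alpha lam) z + alpha lam for an
   eigenvalue lam of Q, and conversely every such root is an eigenvalue of A.
   All roots of z^2 + b z + c have real part at most -rho iff 2 rho <= b and
   rho^2 - b rho + c >= 0.  With alpha = 1/L, mu = alpha lam ranges over
   [1/kappa, 1]; at mu = 1/kappa the two conditions force rho^2 <= 1/kappa, and
   for rho = 1/sqrt kappa they must be tight there, which together with the
   conditions at mu = 1 pins down (beta, gamma).  Conversely, for the family
   the conditions are affine in mu and hold on all of [1/kappa, 1]. *)

From HB Require Import structures.
From mathcomp Require Import all_boot all_order all_algebra.
From mathcomp Require Import reals.
From mathcomp Require Import complex.
From mathcomp Require Import ring lra.

Set Implicit Arguments.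
Unset Strict Implicit.
Unset Printing Implicit Defensive.

Import Order.TTheory GRing.Theory Num.Theory.
Local Open Scope ring_scope.

Section QuadraticRoots.
Variable R : realType.
Local Open Scope complex_scope.
Implicit Types (b c rho x y : R) (z : R[i]).

Lemma quadraticC b c x y :
  (x +i* y) ^+ 2 + b%:C * (x +i* y) + c%:C =
  (x ^+ 2 - y ^+ 2 + b * x + c) +i* (2 * x * y + b * y).
Proof. by rewrite expr2 /=; congr Complex; ring. Qed.

Lemma quadratic_root_Re_le b c rho z :
  2 * rho <= b -> 0 <= rho ^+ 2 - b * rho + c ->
  z ^+ 2 + b%:C * z + c%:C = 0 -> complex.Re z <= - rho.
Proof.
case: z => x y /= hb hc; rewrite quadraticC => -[eRe eIm].
have /eqP : (2 * x + b) * y = 0 by rewrite -eIm; ring.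
rewrite mulf_eq0 => /orP[/eqP|/eqP y0]; first lra.
rewrite y0 in eRe; rewrite leNgt; apply/negP => x_gt.
have : (x + rho) * (x - rho + b) = - (rho ^+ 2 - b * rho + c).
  by rewrite -[LHS]subr0 -eRe; ring.
have : 0 < (x + rho) * (x - rho + b) by apply: mulr_gt0; lra.
lra.
Qed.

Lemma quadratic_roots_Re_le b c rho :
  (forall z, z ^+ 2 + b%:C * z + c%:C = 0 -> complex.Re z <= - rho) ->
  2 * rho <= b /\ 0 <= rho ^+ 2 - b * rho + c.
Proof.
move=> roots_le.
have root_le x y : x ^+ 2 - y ^+ 2 + b * x + c = 0 -> 2 * x * y + b * y = 0 ->
    x <= - rho.
  by move=> eRe eIm; apply: (roots_le (x +i* y)); rewrite quadraticC eRe eIm.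
have [D_ge0|D_lt0] := lerP 0 (b ^+ 2 - 4 * c).
- pose d := Num.sqrt (b ^+ 2 - 4 * c).
  have dd : d ^+ 2 = b ^+ 2 - 4 * c by rewrite sqr_sqrtr.
  have d_ge0 : 0 <= d by apply: sqrtr_ge0.
  have r1 : (- b + d) / 2 <= - rho by apply: (root_le _ 0); [lra | ring].
  have r2 : (- b - d) / 2 <= - rho by apply: (root_le _ 0); [lra | ring].
  (* Vieta: rho^2 - b rho + c is the product of the two (-rho - root) *)
  nra.
- pose d := Num.sqrt (4 * c - b ^+ 2).
  have dd : d ^+ 2 = 4 * c - b ^+ 2 by rewrite sqr_sqrtr; lra.
  have : - b / 2 <= - rho by apply: (root_le _ (d / 2)); lra.
  nra.
Qed.

End QuadraticRoots.

Section ComplexifiedSymmetric.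
Variables (R : realType) (n : nat).
Local Open Scope complex_scope.

Lemma cmxE (A : 'M[R]_n) : cmx A = map_mx (real_complex R) A.
Proof. by []. Qed.

Lemma cmx_conj (A : 'M[R]_n) : map_mx conjc (cmx A) = cmx A.
Proof. by apply/matrixP => i j; rewrite !mxE conjc_real. Qed.

Lemma rV_mul_conj_gt0 (w : 'rV[R[i]]_n) : w != 0 -> 0 < (w *m (map_mx conjc w)^T) 0 0.
Proof.
case/rV0Pn => j wj; rewrite mxE (bigD1 j) //= !mxE.
apply: ltr_pwDl; first by rewrite lt_def mulf_neq0 ?conjc_eq0 ?mulcJ_ge0.
by apply: sumr_ge0 => k _; rewrite !mxE mulcJ_ge0.
Qed.

Lemma cmx_sym_eigenvalue (Q : 'M[R]_n) (l : R[i]) :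
  Q^T = Q -> eigenvalue (cmx Q) l -> exists2 lam, eigenvalue Q lam & l = lam%:C.
Proof.
move=> QT /eigenvalueP[w wQ w0].
pose wc := map_mx conjc w.
have lJ : l^* = l.
  have : l *: (w *m wc^T) = l^* *: (w *m wc^T).
    rewrite scalemxAl -wQ -mulmxA -{1}QT /cmx -map_trmx -trmx_mul -/(cmx Q).
    have -> : wc *m cmx Q = map_mx conjc (w *m cmx Q) by rewrite map_mxM cmx_conj.
    by rewrite wQ map_mxZ linearZ /= -scalemxAr.
  move/(congr1 (fun M : 'M_1 => M 0 0)); rewrite [LHS]mxE [RHS]mxE => /esym.
  by apply: mulIf; apply: lt0r_neq0; apply: rV_mul_conj_gt0.
have lR : l = (complex.Re l)%:C by case: l lJ {wQ} => x y [yN]; congr Complex; lra.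
exists (complex.Re l) => //.
rewrite -(eigenvalue_map (real_complex R)); apply/eigenvalueP; exists w => //.
by change (w *m cmx Q = (complex.Re l)%:C *: w); rewrite -lR.
Qed.
End ComplexifiedSymmetric.

Section AGFSpectrum.
Variables (R : realType) (n : nat) (Q : 'M[R]_n) (alpha beta gamma : R).
Local Open Scope complex_scope.
Local Notation A := (cmx (AGF_matrix alpha beta gamma Q)).
Local Notation f := (real_complex R).

Lemma AGF_block_eigenP (u w : 'rV[R[i]]_n) (z : R[i]) :
  row_mx u w *m A = z *: row_mx u w <->
  - f alpha *: (w *m cmx Q) = z *: u /\
  u - f (1 - beta) *: w - f (gamma * alpha) *: (w *m cmx Q) = z *: w.
Proof.
rewrite cmxE /AGF_matrix map_block_mx mul_row_block map_mx0 map_mx1 !map_mxN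
  map_mxD !map_mxZ map_mx1 mulmx0 add0r mulmx1 scale_row_mx.
rewrite !mulmxN mulmxDr -!scalemxAr mulmx1 -scaleNr.
by rewrite opprD addrA -cmxE; split => [/eq_row_mx|[-> ->]].
Qed.

Lemma AGF_eigenvalue_of_root (lam : R) (z : R[i]) :
  eigenvalue Q lam -> alpha * lam != 0 ->
  z ^+ 2 + ((1 - beta) + gamma * alpha * lam)%:C * z + (alpha * lam)%:C = 0 ->
  eigenvalue A z.
Proof.
case/eigenvalueP => x xQ x0 al0 ez.
have z0 : z != 0.
  apply: contra_eq_neq ez => ->; rewrite expr0n mulr0 !add0r.
  by rewrite (inj_eq (@complexI _)).
pose xc := map_mx f x.
have xcQ : xc *m cmx Q = f lam *: xc by rewrite -map_mxM xQ map_mxZ.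
apply/eigenvalueP; exists (row_mx ((- f (alpha * lam) / z) *: xc) xc); last first.
  by rewrite -row_mx0; apply: contraNneq x0 => /eq_row_mx[_ /eqP]; rewrite map_mx_eq0.
apply/AGF_block_eigenP; rewrite xcQ !scalerA -!scalerBl; split; congr (_ *: _).
- by rewrite mulrCA mulfV // mulr1 rmorphM mulNr.
- apply: (mulIf z0); rewrite !mulrBl -mulrA mulVf // mulr1.
  by rewrite -[RHS]subr0 -ez !rmorphD !rmorphM /=; ring.
Qed.

Lemma AGF_eigenvalue_cases (z : R[i]) :
  Q^T = Q -> alpha != 0 -> eigenvalue A z ->
  1 + gamma%:C * z = 0 \/ exists2 lam, eigenvalue Q lam &
    z ^+ 2 + ((1 - beta) + gamma * alpha * lam)%:C * z + (alpha * lam)%:C = 0.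
Proof.
move=> QT al0 /eigenvalueP[v]; rewrite -(hsubmxK v).
set u := lsubmx v; set w := rsubmx v.
move=> /AGF_block_eigenP[e1 e2] v0; set P := w *m cmx Q in e1 e2.
have eu : u = z *: w + f (1 - beta) *: w + f (gamma * alpha) *: P.
  by rewrite -e2 addrAC subrK subrK.
have w0 : w != 0.
  apply: contraNneq v0 => w0; rewrite eu /P w0 mul0mx !scaler0 !addr0.
  by rewrite row_mx0.
have eP : (- f alpha * (1 + f gamma * z)) *: P = (z ^+ 2 + f (1 - beta) * z) *: w.
  apply/rowP => j; move/rowP/(_ j): e1; rewrite eu !mxE => e1.
  by rewrite mulrDr mulr1 mulrDl e1 rmorphM; ring.
have [|gz0] := eqVneq (1 + f gamma * z) 0; [by left | right].
pose c := - f alpha * (1 + f gamma * z).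
have c0 : c != 0 by rewrite mulf_neq0 ?oppr_eq0 ?fmorph_eq0.
have [lam lamQ lamE] : exists2 lam, eigenvalue Q lam &
    (z ^+ 2 + f (1 - beta) * z) / c = f lam.
  apply: cmx_sym_eigenvalue => //; apply/eigenvalueP; exists w => //.
  by rewrite -/P -[P](scalerK c0) eP scalerA mulrC.
exists lam => //.
have e : z ^+ 2 + f (1 - beta) * z = f lam * c by rewrite -lamE mulfVK.
transitivity (z ^+ 2 + f (1 - beta) * z - f lam * c); last by rewrite e subrr.
by rewrite /c !rmorphD !rmorphM; ring.
Qed.

End AGFSpectrum.

Lemma eigenvalue_diag_mx (F : fieldType) n (d : 'rV[F]_n) a :
  eigenvalue (diag_mx d) a = (a \in [seq d 0 i | i <- enum 'I_n]).
Proof.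
rewrite eigenvalue_root_char char_poly_trig ?diag_mx_is_trig //.
under eq_bigr do rewrite mxE eqxx mulr1n.
by rewrite -(big_map (d 0) xpredT (fun b => 'X - b%:P)) root_prod_XsubC enumT.
Qed.

Lemma diag_mx_posdef (R : realType) n (d : 'rV[R]_n) :
  (forall i, 0 < d 0 i) -> sym_posdef (diag_mx d).
Proof.
move=> d_gt0; split; first exact: tr_diag_mx.
move=> x /cV0Pn[j xj]; rewrite mxE (bigD1 j) //= mul_mx_diag !mxE.
have sq_mul i : x i 0 * d 0 i * x i 0 = d 0 i * x i 0 ^+ 2 by ring.
rewrite sq_mul; apply: ltr_pwDl; first by rewrite mulr_gt0 // exprn_even_gt0.
by apply: sumr_ge0 => k _; rewrite !mxE sq_mul mulr_ge0 ?sqr_ge0 ?ltW.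
Qed.

Lemma in_QmL_exists (R : realType) n (m L : R) :
  0 < m -> m <= L -> (0 < n)%N -> (m < L -> (1 < n)%N) ->
  exists Q : 'M[R]_n, in_QmL m L Q.
Proof.
case: n => [//|n] m_gt0 mL _ n_gt1.
pose d : 'rV[R]_n.+1 := \row_i (if i == ord0 then L else m).
have d_in i : d 0 i \in [:: L; m] by rewrite mxE; case: ifP; rewrite !inE eqxx ?orbT.
exists (diag_mx d); split; [|split; [|split]].
- by apply: diag_mx_posdef => i; move: (d_in i); rewrite !inE => /orP[]/eqP->; lra.
- by rewrite eigenvalue_diag_mx; apply/mapP; exists ord0; rewrite ?mem_enum // mxE.
- rewrite eigenvalue_diag_mx; apply/mapP.
  have [<-|mL'] := eqVneq L m; first by exists ord0; rewrite ?mem_enum // mxE.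
  have lt1n : (1 < n.+1)%N by apply: n_gt1; rewrite lt_def mL' mL.
  by exists (Ordinal lt1n); rewrite ?mem_enum // mxE.
- move=> a; rewrite eigenvalue_diag_mx => /mapP[i _ ->].
  by move: (d_in i); rewrite !inE => /orP[]/eqP->; rewrite ?mL lexx.
Qed.

Section StabilityCriteria.
Variables (R : realType) (n : nat) (m L alpha beta gamma rho : R).
Local Open Scope complex_scope.
Local Notation damping lam := ((1 - beta) + gamma * alpha * lam).

Lemma AGF_exp_stable_of_bounds :
  0 < rho -> alpha != 0 -> 0 <= gamma -> rho * gamma <= 1 ->
  (forall lam, m <= lam <= L -> 2 * rho <= damping lam /\
     0 <= rho ^+ 2 - damping lam * rho + alpha * lam) ->
  AGF_exp_stable n m L alpha beta gamma rho.
Proof.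
move=> rho_gt0 al0 ga_ge0 rho_ga bounds; split => // Q [[QT _] [_ [_ specQ]]] z.
case/(AGF_eigenvalue_cases QT al0) => [|[lam lamQ ez]].
  case: z => x y [/= ex _].
  have ga_gt0 : 0 < gamma.
    by rewrite lt_def ga_ge0 andbT; apply/eqP => ga0; rewrite ga0 in ex; lra.
  have : gamma * (x + rho) <= 0 by lra.
  by rewrite pmulr_rle0 // => ?; lra.
have [b_ge p_ge] := bounds lam (specQ lam lamQ).
exact: quadratic_root_Re_le b_ge p_ge ez.
Qed.

Lemma AGF_exp_stable_bounds (Q : 'M[R]_n) lam :
  AGF_exp_stable n m L alpha beta gamma rho -> in_QmL m L Q -> eigenvalue Q lam ->
  0 < alpha * lam ->
  2 * rho <= damping lam /\ 0 <= rho ^+ 2 - damping lam * rho + alpha * lam.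
Proof.
move=> [_ stable] QmL lamQ al_gt0; apply: quadratic_roots_Re_le => z ez.
exact/(stable Q QmL)/(AGF_eigenvalue_of_root lamQ (lt0r_neq0 al_gt0) ez).
Qed.

End StabilityCriteria.

Section OptimalRate.
Variables (R : realType) (n : nat) (m L : R).
Hypotheses (m_gt0 : 0 < m) (m_le_L : m <= L).
Hypotheses (n_gt0 : (0 < n)%N) (n_gt1 : m < L -> (1 < n)%N).
Local Notation kappa := (L / m).
Local Notation s := (Num.sqrt kappa).

Let L_gt0 : 0 < L. Proof. exact: lt_le_trans m_le_L. Qed.
Let s_sq : s ^+ 2 = kappa. Proof. by rewrite sqr_sqrtr // divr_ge0 // ltW. Qed.
Let s_ge1 : 1 <= s.
Proof.
have : 1 <= kappa by rewrite ler_pdivlMr // mul1r.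
by have := sqrtr_ge0 kappa; have := s_sq; nra.
Qed.
Let alpha_m : 1 / L * m = (1 / s) ^+ 2.
Proof. by rewrite expr_div_n s_sq expr1n mul1r div1r invf_div mulrC. Qed.
Let s_gt0 : 0 < s. Proof. exact: lt_le_trans s_ge1. Qed.
Let rate_gt0 : 0 < 1 / s. Proof. by rewrite divr_gt0. Qed.
Let alpha_L : 1 / L * L = 1. Proof. by rewrite mul1r mulVf ?lt0r_neq0. Qed.

Lemma AGF_exp_stable_rate_le beta gamma rho :
  AGF_exp_stable n m L (1 / L) beta gamma rho -> rho <= 1 / s.
Proof.
move=> stable; have [Q QmL] := in_QmL_exists m_gt0 m_le_L n_gt0 n_gt1.
have mQ : eigenvalue Q m by case: QmL => _ [_ []].
have am_gt0 : 0 < 1 / L * m by rewrite alpha_m exprn_gt0.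
have [b_ge /[!alpha_m] p_ge] := AGF_exp_stable_bounds stable QmL mQ am_gt0.
have := stable.1; have := rate_gt0; nra.
Qed.

Lemma AGF_family_exp_stable v : 0 <= v <= 1 ->
  AGF_exp_stable n m L (1 / L) (1 + (v - 2) / s) (v * s) (1 / s).
Proof.
move=> /andP[v_ge0 v_le1].
have st : s * (1 / s) = 1 by rewrite mul1r mulfV ?lt0r_neq0.
apply: AGF_exp_stable_of_bounds => //.
- by rewrite div1r invr_neq0 ?lt0r_neq0.
- exact: mulr_ge0 v_ge0 (ltW s_gt0).
- by rewrite mulrC -mulrA st mulr1.
move=> lam /andP[m_le_lam _]; set t := 1 / s in st *; set mu := 1 / L * lam.
have t_mu : t ^+ 2 <= mu by rewrite -alpha_m ler_pM2l // divr_gt0.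
have s_mu : t <= s * mu.
  have -> : t = s * t ^+ 2 by rewrite expr2 mulrA st mul1r.
  by rewrite ler_pM2l.
have -> : 1 - (1 + (v - 2) / s) + v * s * (1 / L) * lam = (2 - v) * t + v * (s * mu).
  by rewrite /t /mu; field; rewrite !lt0r_neq0.
split; first nra.
have -> : t ^+ 2 - ((2 - v) * t + v * (s * mu)) * t + mu = (1 - v) * (mu - t ^+ 2).
  by rewrite /t; field; rewrite lt0r_neq0.
by rewrite mulr_ge0 ?subr_ge0.
Qed.

Lemma AGF_optimal_rate_params : m < L -> forall beta gamma,
  AGF_exp_stable n m L (1 / L) beta gamma (1 / s) ->
  exists v, 0 <= v <= 1 /\ beta = 1 + (v - 2) / s /\ gamma = v * s.
Proof.
move=> m_lt_L beta gamma stable; have [Q QmL] := in_QmL_exists m_gt0 m_le_L n_gt0 n_gt1.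
have [_ [LQ [mQ _]]] := QmL.
have am_gt0 : 0 < 1 / L * m by rewrite alpha_m exprn_gt0.
have aL_gt0 : 0 < 1 / L * L by rewrite alpha_L.
have [bm_ge pm_ge] := AGF_exp_stable_bounds stable QmL mQ am_gt0.
have [bL_ge pL_ge] := AGF_exp_stable_bounds stable QmL LQ aL_gt0.
rewrite -[gamma * _ * m]mulrA alpha_m in bm_ge pm_ge.
rewrite -[gamma * _ * L]mulrA alpha_L mulr1 in bL_ge pL_ge.
set t := 1 / s in bm_ge pm_ge bL_ge pL_ge *.
have am : 1 / L * m = t ^+ 2 := alpha_m.
have t_pos : 0 < t := rate_gt0.
have t2_lt1 : t ^+ 2 < 1 by rewrite -am mul1r mulrC ltr_pdivrMr // mul1r.
have theta : 1 - beta = 2 * t - gamma * t ^+ 2.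
  suff : 1 - beta + gamma * t ^+ 2 <= 2 * t by lra.
  nra.
rewrite theta in bL_ge pL_ge.
have gamma_ge0 : 0 <= gamma by nra.
have gamma_t : gamma * t <= 1 by nra.
exists (gamma * t); split; first by rewrite gamma_t andbT mulr_ge0 // ltW.
have st : s * t = 1 by rewrite /t mul1r mulfV ?lt0r_neq0.
split; last by rewrite -mulrA [t * s]mulrC st mulr1.
have -> : beta = 1 - (2 * t - gamma * t ^+ 2) by lra.
by rewrite /t; field; rewrite lt0r_neq0.
Qed.

End OptimalRate.

Lemma nesterov_parameter (R : realType) (kappa : R) : 4 <= kappa ->
  let v := (Num.sqrt kappa - 2) / (kappa - 1) in
  0 <= v <= 1 /\ v * Num.sqrt kappa = 1 + (v - 2) / Num.sqrt kappa.
Proof.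
move=> kappa_ge4 v; set s := Num.sqrt kappa.
have s_sq : s ^+ 2 = kappa by rewrite sqr_sqrtr //; lra.
have s_ge0 : 0 <= s := sqrtr_ge0 kappa.
have s_ge2 : 2 <= s by nra.
have kappa1_gt0 : 0 < kappa - 1 by lra.
split.
  rewrite /v divr_ge0 ?(ltW kappa1_gt0) ?subr_ge0 //=.
  by rewrite ler_pdivrMr // mul1r -/s; nra.
rewrite /v -/s -s_sq; field.
by rewrite !lt0r_neq0 //; nra.
Qed.

Theorem proposition5 (R : realType) (n : nat) (m L : R) :
  0 < m -> m <= L -> (0 < n)%N -> (m < L -> (1 < n)%N) ->
  let kappa := L / m in
  let alpha := 1 / L in
  (* optimality: no constant (beta, gamma) gives a larger rate *)
  (forall beta gamma rho : R,
      AGF_exp_stable n m L alpha beta gamma rho ->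
      rho <= 1 / Num.sqrt kappa) /\
  (* the family beta = 1 + (v-2)/sqrt kappa, gamma = v sqrt kappa, v in [0,1],
     achieves the rate 1/sqrt kappa *)
  (forall v : R, 0 <= v <= 1 ->
      AGF_exp_stable n m L alpha (1 + (v - 2) / Num.sqrt kappa)
        (v * Num.sqrt kappa) (1 / Num.sqrt kappa)) /\
  (* and (when kappa > 1) these are the only parameters achieving it *)
  (m < L -> forall beta gamma : R,
      AGF_exp_stable n m L alpha beta gamma (1 / Num.sqrt kappa) ->
      exists v : R, 0 <= v <= 1 /\
        beta = 1 + (v - 2) / Num.sqrt kappa /\ gamma = v * Num.sqrt kappa) /\
  (* heavy-ball (gamma = 0, v = 0) *)
  AGF_exp_stable n m L alpha (1 + (0 - 2) / Num.sqrt kappa) 0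
    (1 / Num.sqrt kappa) /\
  (* Nesterov (gamma = beta) for kappa >= 4 *)
  (4 <= kappa ->
    let v := (Num.sqrt kappa - 2) / (kappa - 1) in
    let beta := 1 + (v - 2) / Num.sqrt kappa in
    0 <= v <= 1 /\ v * Num.sqrt kappa = beta /\
    AGF_exp_stable n m L alpha beta beta (1 / Num.sqrt kappa)).
Proof.
move=> m_gt0 m_le_L n_gt0 n_gt1 kappa alpha.
have family := AGF_family_exp_stable n m_gt0 m_le_L.
split; first exact: AGF_exp_stable_rate_le.
split; first exact: family.
split; first exact: AGF_optimal_rate_params m_gt0 m_le_L n_gt0 n_gt1.
split; first by have := family 0; rewrite mul0r; apply; rewrite lexx ler01.
move=> kappa_ge4 v beta; have [v01 v_beta] := nesterov_parameter kappa_ge4.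
by do 2!split=> //; have := family v v01; rewrite v_beta.
Qed.
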